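(* Let $m,n$ be positive integers, let $D$ be an $m\times n$ diagram, and let $\sigma\in S_{m+n}$ be its restricted permutation. Then $\ker(P_\omega+P_\sigma)\cong\ker(M(D))$ as $\mathbb{Q}$-vector spaces; in particular they have the same dimension.
   Context: An $m\times n$ diagram is an $m\times n$ grid of squares, each coloured black or white. Rows are numbered top to bottom and columns left to right. Pipe dreams: on each white square place two arcs, one joining its bottom and left edge midpoints and one joining its top and right edge midpoints. On each black square place a cross, i.e. a vertical segment joining its bottom and top midpoints and a horizontal segment joining its left and right midpoints. Label the boundary as follows: the row that is $r$-th from the bottom gets label $r$ at its left end and $n+r$ at its right end; column $j$ gets label $m+j$ at its top and $j$ at its bottom. The restricted permutation $\sigma$ of $D$ sends a label $i$ on the bottom or right side to the label on the left or top side where the pipe entering at $i$ exits (going straight through crosses). The permutation $\omega$ is defined by $\omega(i)=m+i$ for $1\le i\le n$ and $\omega(i)=i-n$ for $n<i\le m+n$. For $\mu\in S_k$, $P_\mu$ is the $k\times k$ matrix with $P_\mu[i,j]=\delta_{j,\mu(i)}$. If $D$ has $N$ white squares, label them bijectively by $[N]$. Then $M(D)$ is the $N\times N$ skew-symmetric matrix whose entries are as follows. $M(D)[i,j]=1$ if white square $i$ lies strictly below square $j$ in the same column or strictly to the right of square $j$ in the same row. $M(D)[i,j]=-1$ if square $i$ lies strictly above square $j$ in the same column or strictly to the left of it in the same row. $M(D)[i,j]=0$ otherwise. *)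

From mathcomp Require Import all_boot all_order all_algebra.
Set Implicit Arguments. Unset Strict Implicit. Unset Printing Implicit Defensive.
Import GRing.Theory Num.Theory.
Local Open Scope ring_scope.

(* A diagram is an m x n boolean matrix; D i j = true means square (i,j) is
   black.  Rows are indexed 0..m-1 top to bottom, columns 0..n-1 left to right
   (0-based version of the paper's numbering). *)
Definition diagram (m n : nat) := 'M[bool]_(m, n).

Definition blackn (m n : nat) (D : diagram m n) (i j : nat) : bool :=
  match @insub nat (fun k => k < m)%N 'I_m i, @insub nat (fun k => k < n)%N 'I_n j with
  | Some i', Some j' => D i' j'
  | _, _ => false
  end.

(* The pipe is in cell (i,j); [up] = true means it entered the
   cell from its bottom edge (travelling upward), [up] = false means it entered
   from the right edge (travelling leftward).  A white square turns the pipe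
   (bottom->left, right->top), a black square lets it go straight.  The result
   is the (1-based) boundary label where the pipe exits: the left end of the
   row r-th from the bottom has label r = m - i, the top of column j (0-based)
   has label m + j + 1.  The fuel m + n suffices since each step moves the
   pipe one cell up or left. *)
Fixpoint trace (m n : nat) (D : diagram m n) (fuel i j : nat) (up : bool) : nat :=
  match fuel with
  | 0 => 0
  | S f =>
      let up' := if blackn D i j then up else ~~ up in
      if up' then
        (if i is S i' then trace D f i' j up' else (m + j.+1)%N)
      else
        (if j is S j' then trace D f i j' up' else (m - i)%N)
  end.

(* Restricted permutation sigma on labels 1..m+n:
   label j (1 <= j <= n) = bottom of column j: pipe enters cell (m-1, j-1) going up;
   label n + r (1 <= r <= m) = right end of the row r-th from the bottom, i.e. row
   index m - r: pipe enters cell (m-r, n-1) going left. *)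
Definition restricted_perm (m n : nat) (D : diagram m n) (l : nat) : nat :=
  if (l <= n)%N then trace D (m + n) (m.-1) (l.-1) true
  else trace D (m + n) (m - (l - n)) (n.-1) false.

Definition omega (m n : nat) (l : nat) : nat :=
  if (l <= n)%N then (m + l)%N else (l - n)%N.

(* Permutation matrix P_mu[i,j] = delta_{j, mu(i)} for labels 1..k;
   index i : 'I_k stands for label i+1. *)
Definition perm_matrix (k : nat) (mu : nat -> nat) : 'M[rat]_k :=
  \matrix_(i < k, j < k) (((j : nat).+1 == mu (i : nat).+1) : nat)%:R.

Definition MD (m n : nat) (D : diagram m n) (N : nat)
  (lab : 'I_N -> 'I_m * 'I_n) : 'M[rat]_N :=
  \matrix_(a < N, b < N)
    let: (ia, ja) := lab a in let: (ib, jb) := lab b in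
    if ((ja == jb) && (ib < ia)%N) || ((ia == ib) && (jb < ja)%N) then 1
    else if ((ja == jb) && (ia < ib)%N) || ((ia == ib) && (ja < jb)%N) then -1
    else 0.

(* Dimension of the (right) kernel {x | A x = 0} of a square rational matrix:
   mathcomp's kermx A spans the left kernel, so we use kermx A^T. *)
Definition kerdim (k : nat) (A : 'M[rat]_k) : nat := \rank (kermx A^T).

From mathcomp Require Import all_boot all_order all_algebra.
From mathcomp Require Import zify ring lra.
Set Implicit Arguments. Unset Strict Implicit. Unset Printing Implicit Defensive.
Import GRing.Theory Num.Theory.
Local Open Scope ring_scope.

(* Spread a vector x indexed by the white squares over the grid, and send it to
   the vector w on the boundary labels with the column totals of x at the tops of
   the columns and the negated row totals at the left ends of the rows.
   Conversely, give each white square half the difference of the values of w at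
   the exits of the pipes through its top and its left edge.  These maps are
   mutually inverse between ker M(D) and ker (P_omega + P_sigma) because of an
   invariant along pipes: for x in ker M(D), twice the column sum of x above an
   edge minus the column total is the negated value of w at the exit of the pipe
   crossing that edge, and similarly for row sums.  At a white square the kernel
   equation of M(D) is exactly what carries this through the turn of the pipe;
   on the bottom and right boundary it becomes w (omega l) + w (sigma l) = 0. *)

Section Pipes.

Variables (m n : nat) (D : diagram m n).

Definition exit_up f i j := if i is i'.+1 then trace D f i' j true else (m + j.+1)%N.
Definition exit_left f i j := if j is j'.+1 then trace D f i j' false else (m - i)%N.

Lemma trace_succ f i j up :
  trace D f.+1 i j up = if (if blackn D i j then up else ~~ up)
                        then exit_up f i j else exit_left f i j.
Proof. by rewrite /=; case: (blackn D i j); case: up. Qed.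

Lemma trace_fuel f g i j up :
  (i + j < f)%N -> (i + j < g)%N -> trace D f i j up = trace D g i j up.
Proof.
elim: f g i j up => [|f IH] [|g] i j up //= Hf Hg.
rewrite -/(trace D f.+1 i j up) -/(trace D g.+1 i j up) !trace_succ.
case: (if blackn D i j then up else ~~ up).
  by case: i Hf Hg => [|i] Hf Hg //=; apply: IH; lia.
by case: j Hf Hg => [|j] Hf Hg //=; apply: IH; lia.
Qed.

Lemma exit_up_fuel f g i j :
  (i + j <= f)%N -> (i + j <= g)%N -> exit_up f i j = exit_up g i j.
Proof. case: i => [|i] //= Hf Hg; apply: trace_fuel; lia. Qed.

Lemma exit_left_fuel f g i j :
  (i + j <= f)%N -> (i + j <= g)%N -> exit_left f i j = exit_left g i j.
Proof. case: j => [|j] //= Hf Hg; apply: trace_fuel; lia. Qed.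

(* [pipe_top i j] ([pipe_left i j]) is the exit label of the pipe crossing the
   top (left) edge of the cell (i, j), which is a boundary edge for i = 0 (j = 0). *)
Definition pipe_top i j := exit_up (m + n) i j.
Definition pipe_left i j := exit_left (m + n) i j.

Lemma pipe_top_succ i j : (i < m)%N -> (j < n)%N ->
  pipe_top i.+1 j = if blackn D i j then pipe_top i j else pipe_left i j.
Proof.
move=> Hi Hj; rewrite /pipe_top /=.
have -> : (m + n = (m + n).-1.+1)%N by lia.
rewrite trace_succ; case: (blackn D i j) => /=.
  by apply: exit_up_fuel; lia.
by apply: exit_left_fuel; lia.
Qed.

Lemma pipe_left_succ i j : (i < m)%N -> (j < n)%N ->
  pipe_left i j.+1 = if blackn D i j then pipe_left i j else pipe_top i j.
Proof.
move=> Hi Hj; rewrite /pipe_left /=.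
have -> : (m + n = (m + n).-1.+1)%N by lia.
rewrite trace_succ; case: (blackn D i j) => /=.
  by apply: exit_left_fuel; lia.
by apply: exit_up_fuel; lia.
Qed.

Lemma restricted_perm_bottom j : (0 < m)%N -> (j < n)%N ->
  restricted_perm D j.+1 = pipe_top m j.
Proof.
by move=> hm hj; rewrite /restricted_perm ifT // /pipe_top -[X in exit_up _ X _](prednK hm).
Qed.

Lemma restricted_perm_right k : (0 < n)%N -> (n <= k)%N ->
  restricted_perm D k.+1 = pipe_left (m - (k.+1 - n)) n.
Proof.
move=> hn hk; rewrite /restricted_perm ifF; last lia.
by rewrite /pipe_left -[X in exit_left _ _ X](prednK hn).
Qed.

End Pipes.

Definition colsum (X : nat -> nat -> rat) i j := \sum_(k < i) X (k : nat) j.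
Definition rowsum (X : nat -> nat -> rat) i j := \sum_(k < j) X i (k : nat).

Lemma colsumS X i j : colsum X i.+1 j = colsum X i j + X i j.
Proof. by rewrite /colsum big_ord_recr. Qed.

Lemma rowsumS X i j : rowsum X i j.+1 = rowsum X i j + X i j.
Proof. by rewrite /rowsum big_ord_recr. Qed.

Lemma colsum0 X j : colsum X 0 j = 0.
Proof. exact: big_ord0. Qed.

Lemma rowsum0 X i : rowsum X i 0 = 0.
Proof. exact: big_ord0. Qed.

Section PipeSums.

Variables (m n : nat) (D : diagram m n) (X : nat -> nat -> rat) (W : nat -> rat).

Lemma pipe_sums_of_kernel :
  (forall i j, (i < m)%N -> (j < n)%N -> blackn D i j -> X i j = 0) ->
  (forall i j, (i < m)%N -> (j < n)%N -> ~~ blackn D i j ->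
     2 * (colsum X i j + rowsum X i j + X i j) = colsum X m j + rowsum X i n) ->
  (forall j, (j < n)%N -> W (m + j.+1)%N = colsum X m j) ->
  (forall i, (i < m)%N -> W (m - i)%N = - rowsum X i n) ->
  forall i j,
   ((i <= m)%N -> (j < n)%N -> 2 * colsum X i j - colsum X m j = - W (pipe_top D i j)) /\
   ((i < m)%N -> (j <= n)%N -> 2 * rowsum X i j - rowsum X i n = W (pipe_left D i j)).
Proof.
move=> Xblack Mker Wtop Wleft i j.
move: {2}(i + j)%N (erefl (i + j)%N) => s; elim: s i j => [|s IH] i j Hs.
  have -> : i = 0%N by lia. have -> : j = 0%N by lia.
  by split=> H1 H2; rewrite /pipe_top /pipe_left /= ?colsum0 ?rowsum0 ?Wtop ?Wleft //; lra.
split=> H1 H2.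
  case: i Hs H1 => [|i] Hs H1; first by rewrite colsum0 /pipe_top /= Wtop //; lra.
  have [IHtop IHleft] := IH i j (ltac:(lia)).
  rewrite colsumS pipe_top_succ; try lia.
  case Hb: (blackn D i j); first by rewrite Xblack ?addr0; try apply: IHtop; lia.
  have := Mker i j (ltac:(lia)) H2 (negbT Hb).
  have := IHleft (ltac:(lia)) (ltac:(lia)); lra.
case: j Hs H2 => [|j] Hs H2; first by rewrite rowsum0 /pipe_left /= Wleft //; lra.
have [IHtop IHleft] := IH i j (ltac:(lia)).
rewrite rowsumS pipe_left_succ; try lia.
case Hb: (blackn D i j); first by rewrite Xblack ?addr0; try apply: IHleft; lia.
have := Mker i j H1 (ltac:(lia)) (negbT Hb).
have := IHtop (ltac:(lia)) (ltac:(lia)); lra.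
Qed.

Lemma pipe_sums_telescope :
  (forall i j, (i < m)%N -> (j < n)%N ->
     X i j = if blackn D i j then 0 else (W (pipe_top D i j) - W (pipe_left D i j)) / 2) ->
  (forall i j, (i <= m)%N -> (j < n)%N ->
     2 * colsum X i j = W (m + j.+1)%N - W (pipe_top D i j)) /\
  (forall i j, (i < m)%N -> (j <= n)%N ->
     2 * rowsum X i j = W (pipe_left D i j) - W (m - i)%N).
Proof.
move=> Xdef; split=> i j.
  elim: i => [|i IH] H1 H2; first by rewrite colsum0 /pipe_top /=; lra.
  rewrite colsumS pipe_top_succ ?Xdef; try lia.
  by have := IH (ltnW H1) H2; case: (blackn D i j); lra.
elim: j => [|j IH] H1 H2; first by rewrite rowsum0 /pipe_left /=; lra.
rewrite rowsumS pipe_left_succ ?Xdef; try lia.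
by have := IH H1 (ltnW H2); case: (blackn D i j); lra.
Qed.

End PipeSums.

Lemma rank_kermx_leq (F : fieldType) k1 k2 p1 p2
    (A1 : 'M[F]_(k1, p1)) (A2 : 'M[F]_(k2, p2)) (f : 'M_(k1, k2)) (g : 'M_(k2, k1)) :
  (forall u : 'rV_k1, u *m A1 = 0 -> u *m f *m A2 = 0 /\ u *m f *m g = u) ->
  (\rank (kermx A1) <= \rank (kermx A2))%N.
Proof.
move=> fg_ker.
have : forall i, row i (kermx A1) *m A1 = 0.
  by move=> i; apply/sub_kermxP; exact: row_sub.
move: (kermx A1) => K1 K1_ker.
have K1_retract : K1 *m f *m g = K1.
  by apply/row_matrixP => i; rewrite !row_mul; have [_ ->] := fg_ker _ (K1_ker i).
have K1f_sub : (K1 *m f <= kermx A2)%MS.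
  apply/row_subP => i; rewrite row_mul; apply/sub_kermxP.
  by have [-> _] := fg_ker _ (K1_ker i).
rewrite -{1}K1_retract; apply: leq_trans (mxrankM_maxl _ _) _; exact: mxrankS.
Qed.

Lemma rowv0P k (v : 'rV[rat]_k) : v = 0 <-> forall i, v 0 i = 0.
Proof. by split=> [-> i|v0]; [rewrite mxE | apply/rowP => i; rewrite v0 mxE]. Qed.

Lemma mulmx_trE k1 k2 (u : 'rV[rat]_k1) (A : 'M[rat]_(k2, k1)) i :
  (u *m A^T) 0 i = \sum_j u 0 j * A i j.
Proof. by rewrite mxE; apply: eq_bigr => j _; rewrite mxE. Qed.

(* The entry of [u] at the 1-based label [l]; it is 0 when [l] is not a label,
   which is what a row of a permutation matrix picks out. *)
Definition label_value k (u : 'rV[rat]_k) (l : nat) : rat :=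
  \sum_(j < k) u 0 j * (((j : nat).+1 == l) : nat)%:R.

Lemma label_value_ord k (u : 'rV[rat]_k) (j : 'I_k) : label_value u (j : nat).+1 = u 0 j.
Proof.
rewrite /label_value (bigD1 j) //= eqxx mulr1 big1 ?addr0 // => i ne.
by rewrite eqSS val_eqE (negbTE ne) mulr0.
Qed.

Lemma perm_matrix_sum_rowE k (mu nu : nat -> nat) (u : 'rV[rat]_k) i :
  (u *m (perm_matrix k mu + perm_matrix k nu)^T) 0 i
  = label_value u (mu (i : nat).+1) + label_value u (nu (i : nat).+1).
Proof.
by rewrite mulmx_trE -big_split; apply: eq_bigr => j _; rewrite !mxE mulrDr.
Qed.

Section PermKernel.

Variables (m n : nat) (D : diagram m n).
Hypotheses (hm : (0 < m)%N) (hn : (0 < n)%N).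

Lemma perm_kernelP (u : 'rV[rat]_(m + n)) :
  u *m (perm_matrix (m + n) (omega m n) + perm_matrix (m + n) (restricted_perm D))^T = 0
  <-> (forall j, (j < n)%N -> label_value u (m + j.+1)%N + label_value u (pipe_top D m j) = 0)
   /\ (forall i, (i < m)%N -> label_value u (m - i)%N + label_value u (pipe_left D i n) = 0).
Proof.
rewrite rowv0P; split=> [u_ker|[top_ker left_ker] k].
  split=> [j hj|i hi].
    have := u_ker (Ordinal (ltn_addl m hj)).
    by rewrite perm_matrix_sum_rowE /= /omega ifT // restricted_perm_bottom.
  have hk : (n + (m - i.+1) < m + n)%N by lia.
  have := u_ker (Ordinal hk); rewrite perm_matrix_sum_rowE /= /omega ifF; last lia.
  rewrite restricted_perm_right //; last lia.
  have -> : ((n + (m - i.+1)).+1 - n = m - i)%N by lia.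
  by rewrite subKn //; lia.
rewrite perm_matrix_sum_rowE /omega.
case: (leqP (k : nat).+1 n) => hk; first by rewrite restricted_perm_bottom // top_ker.
rewrite restricted_perm_right //; have := ltn_ord k => hkmn.
have := left_ker (m - ((k : nat).+1 - n))%N (ltac:(lia)).
by rewrite subKn //; lia.
Qed.

End PermKernel.

Definition ind (b : bool) : rat := (b : nat)%:R.

Section WhiteCells.

Variables (m n : nat) (D : diagram m n) (N : nat) (lab : 'I_N -> 'I_m * 'I_n).
Hypothesis lab_inj : injective lab.
Hypothesis lab_onto : forall c : 'I_m * 'I_n, ~~ D c.1 c.2 <-> exists k, lab k = c.

Definition cell_value (x : 'rV[rat]_N) (i j : nat) : rat :=
  \sum_b x 0 b * ind (((lab b).1 : nat) == i) * ind (((lab b).2 : nat) == j).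

Lemma ind_sum c i : \sum_(k < i) ind (c == (k : nat)) = ind (c < i)%N.
Proof.
elim: i => [|i IH]; first by rewrite big_ord0 /ind ltn0.
by rewrite big_ord_recr /= IH /ind ltnS; case: (ltngtP c i) => /=; lra.
Qed.

Lemma colsum_cell_value x i j : colsum (cell_value x) i j
  = \sum_b x 0 b * ind ((lab b).1 < i)%N * ind (((lab b).2 : nat) == j).
Proof.
rewrite /colsum /cell_value exchange_big; apply: eq_bigr => b _.
by rewrite -mulr_suml -mulr_sumr ind_sum.
Qed.

Lemma rowsum_cell_value x i j : rowsum (cell_value x) i j
  = \sum_b x 0 b * ind (((lab b).1 : nat) == i) * ind ((lab b).2 < j)%N.
Proof.
rewrite /rowsum /cell_value exchange_big; apply: eq_bigr => b _.
by rewrite -mulr_sumr ind_sum.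
Qed.

Lemma MD_rowE (x : 'rV[rat]_N) a : let X := cell_value x in
  (x *m (MD D lab)^T) 0 a =
  2 * (colsum X (lab a).1 (lab a).2 + rowsum X (lab a).1 (lab a).2 + X (lab a).1 (lab a).2)
  - colsum X m (lab a).2 - rowsum X (lab a).1 n.
Proof.
rewrite /= mulmx_trE !colsum_cell_value !rowsum_cell_value /cell_value.
rewrite -!big_split mulr_sumr -!sumrB; apply: eq_bigr => b _ /=.
rewrite mxE /ind; case: (lab a) => ia ja; case: (lab b) => ib jb /=.
rewrite !ltn_ord -!val_eqE /=.
by case: (ltngtP ia ib); case: (ltngtP ja jb) => /=; lra.
Qed.

Lemma lab_white a : ~~ blackn D (lab a).1 (lab a).2.
Proof. by rewrite /blackn !valK; apply/lab_onto; exists a. Qed.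

Lemma white_lab i j : (i < m)%N -> (j < n)%N -> ~~ blackn D i j ->
  exists a, ((lab a).1 : nat) = i /\ ((lab a).2 : nat) = j.
Proof.
move=> hi hj; rewrite /blackn !insubT /= => white.
have [a lab_a] : exists a, lab a = (Ordinal hi, Ordinal hj) by apply/lab_onto.
by exists a; rewrite lab_a.
Qed.

Lemma cell_value_black x i j : blackn D i j -> cell_value x i j = 0.
Proof.
move=> black; rewrite /cell_value big1 // => b _; rewrite /ind; move: black.
case: eqP => [<-|_]; last by rewrite mulr0 mul0r.
case: eqP => [<-|_]; last by rewrite mulr0.
by move/negP: (lab_white b).
Qed.

Lemma cell_value_lab x a : cell_value x (lab a).1 (lab a).2 = x 0 a.
Proof.
rewrite /cell_value (bigD1 a) //= !eqxx /ind /= !mulr1 big1 ?addr0 // => b ne_ba.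
case: eqP => [e1|_]; last by rewrite mulr0 mul0r.
case: eqP => [e2|_]; last by rewrite mulr0.
suff /lab_inj eq_ba : lab b = lab a by rewrite eq_ba eqxx in ne_ba.
by move: e1 e2; case: (lab b) (lab a) => ? ? [? ?] /= /val_inj-> /val_inj->.
Qed.

Lemma row_eq_labels (u v : 'rV[rat]_(m + n)) :
  (forall j, (j < n)%N -> label_value u (m + j.+1)%N = label_value v (m + j.+1)%N) ->
  (forall i, (i < m)%N -> label_value u (m - i)%N = label_value v (m - i)%N) ->
  u = v.
Proof.
move=> eq_top eq_left; apply/rowP => k; rewrite -!label_value_ord.
have := ltn_ord k; case: (leqP m k) => hmk hk.
  have -> : (k.+1 = m + (k - m).+1)%N by lia.
  by apply: eq_top; lia.
have -> : (k.+1 = m - (m - k.+1))%N by lia.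
by apply: eq_left; lia.
Qed.

(* Column [k] stands for the label [k + 1]: the top of column [k - m] if
   [m <= k], and the left end of row [m - k - 1] otherwise. *)
Definition boundary_of_cells : 'M[rat]_(N, m + n) :=
  \matrix_(a, k) (if (m <= k)%N then ind (((lab a).2 : nat) == (k : nat) - m)%N
                  else - ind (((lab a).1 : nat) == m - (k : nat).+1)%N).

Lemma boundary_of_cells_top x j : (j < n)%N ->
  label_value (x *m boundary_of_cells) (m + j.+1)%N = colsum (cell_value x) m j.
Proof.
move=> hj; have hk : (m + j < m + n)%N by rewrite ltn_add2l.
rewrite addnS (label_value_ord _ (Ordinal hk)) mxE.
rewrite colsum_cell_value; apply: eq_bigr => b _.
by rewrite mxE /= leq_addr addKn ltn_ord /ind mulr1.
Qed.

Lemma boundary_of_cells_left x i : (i < m)%N ->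
  label_value (x *m boundary_of_cells) (m - i)%N = - rowsum (cell_value x) i n.
Proof.
move=> hi; have hk : (m - i.+1 < m + n)%N by lia.
have -> : (m - i = (Ordinal hk : nat).+1)%N by rewrite /=; lia.
rewrite label_value_ord mxE rowsum_cell_value -sumrN; apply: eq_bigr => b _.
rewrite mxE /= ifF; last lia.
have -> : (m - (m - i.+1).+1 = i)%N by lia.
by rewrite ltn_ord /ind mulr1 mulrN.
Qed.

Definition cells_of_boundary : 'M[rat]_(m + n, N) :=
  \matrix_(k, a) ((ind ((k : nat).+1 == pipe_top D (lab a).1 (lab a).2)
                  - ind ((k : nat).+1 == pipe_left D (lab a).1 (lab a).2)) / 2).

Lemma cell_value_cells_of_boundary v i j : (i < m)%N -> (j < n)%N ->
  cell_value (v *m cells_of_boundary) i j = if blackn D i j then 0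
    else (label_value v (pipe_top D i j) - label_value v (pipe_left D i j)) / 2.
Proof.
move=> hi hj; case black: (blackn D i j); first exact: cell_value_black.
have [a [<- <-]] := white_lab hi hj (negbT black).
rewrite cell_value_lab mxE /label_value -sumrB mulr_suml.
by apply: eq_bigr => k _; rewrite mxE /ind; ring.
Qed.

Hypotheses (hm : (0 < m)%N) (hn : (0 < n)%N).

Let P : 'M[rat]_(m + n) := perm_matrix (m + n) (omega m n) + perm_matrix (m + n) (restricted_perm D).

Lemma cells_of_boundary_kernel (v : 'rV[rat]_(m + n)) : v *m P^T = 0 ->
  v *m cells_of_boundary *m (MD D lab)^T = 0 /\ v *m cells_of_boundary *m boundary_of_cells = v.
Proof.
move/(perm_kernelP D hm hn) => [top_ker left_ker].
set X := cell_value (v *m cells_of_boundary).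
have Xdef := cell_value_cells_of_boundary v.
have [colsumE rowsumE] := pipe_sums_telescope Xdef.
split.
  apply/rowv0P => a; rewrite MD_rowE -/X.
  have := ltn_ord (lab a).1; have := ltn_ord (lab a).2 => ha2 ha1.
  rewrite /X Xdef // (negbTE (lab_white a)) -/X.
  have := colsumE _ _ (ltnW ha1) ha2; have := rowsumE _ _ ha1 (ltnW ha2).
  have := colsumE m _ (leqnn m) ha2; have := rowsumE _ n ha1 (leqnn n).
  have := top_ker _ ha2; have := left_ker _ ha1; lra.
apply: row_eq_labels => [j hj|i hi].
  rewrite boundary_of_cells_top // -/X.
  have := colsumE m j (leqnn m) hj; have := top_ker j hj; lra.
rewrite boundary_of_cells_left // -/X.
have := rowsumE i n hi (leqnn n); have := left_ker i hi; lra.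
Qed.

Lemma boundary_of_cells_kernel (u : 'rV[rat]_N) : u *m (MD D lab)^T = 0 ->
  u *m boundary_of_cells *m P^T = 0 /\ u *m boundary_of_cells *m cells_of_boundary = u.
Proof.
move=> u_ker; set X := cell_value u; set W := label_value (u *m boundary_of_cells).
have Mker i j : (i < m)%N -> (j < n)%N -> ~~ blackn D i j ->
    2 * (colsum X i j + rowsum X i j + X i j) = colsum X m j + rowsum X i n.
  move=> hi hj white; have [a [<- <-]] := white_lab hi hj white.
  by move/rowv0P/(_ a): u_ker; rewrite MD_rowE -/X; lra.
have sums := pipe_sums_of_kernel (fun i j _ _ => @cell_value_black u i j) Mker
  (boundary_of_cells_top u) (boundary_of_cells_left u).
split.
  apply/(perm_kernelP D hm hn); split=> [j hj|i hi].
    have [top _] := sums m j; have := top (leqnn m) hj.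
    by rewrite boundary_of_cells_top // -/W -/X; lra.
  have [_ left] := sums i n; have := left hi (leqnn n).
  by rewrite boundary_of_cells_left // -/W -/X; lra.
apply/rowP => a; rewrite -[LHS]cell_value_lab -[RHS]cell_value_lab -/X.
rewrite cell_value_cells_of_boundary ?ltn_ord // (negbTE (lab_white a)) -/W.
have := ltn_ord (lab a).1; have := ltn_ord (lab a).2 => ha2 ha1.
have [top left] := sums (lab a).1 (lab a).2.
have := top (ltnW ha1) ha2; have := left ha1 (ltnW ha2).
have := Mker _ _ ha1 ha2 (lab_white a); rewrite -/W -/X; lra.
Qed.

End WhiteCells.

Theorem theorem4p6 (m n : nat) (hm : (0 < m)%N) (hn : (0 < n)%N)
  (D : diagram m n) (N : nat) (lab : 'I_N -> 'I_m * 'I_n)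
  (lab_inj : injective lab)
  (lab_onto : forall c : 'I_m * 'I_n, ~~ D c.1 c.2 <-> exists k, lab k = c) :
  kerdim (perm_matrix (m + n) (omega m n) + perm_matrix (m + n) (restricted_perm D))
  = kerdim (MD D lab).
Proof.
apply/eqP; rewrite eqn_leq /kerdim; apply/andP; split.
  apply: (rank_kermx_leq (f := cells_of_boundary D lab) (g := boundary_of_cells lab)).
  exact: cells_of_boundary_kernel lab_inj lab_onto hm hn.
apply: (rank_kermx_leq (f := boundary_of_cells lab) (g := cells_of_boundary D lab)).
exact: boundary_of_cells_kernel lab_inj lab_onto hm hn.
Qed.
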